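(* There exists a $\sigma$-chasable Dd-MDP instance (a fixed finite state/action structure with $\sigma$ a constant independent of $T$, played for any horizon $T$, with $\Gamma$ the set of all policies) such that every online learning algorithm whose policy regret on this instance is sublinear in $T$ has external regret linear in $T$ on the same instance, and every online learning algorithm whose external regret on this instance is sublinear in $T$ has policy regret linear in $T$.
   Context: Dd-MDP: finite state set $\mathcal S$, finite action set $\mathcal X$, feasible sets $X_s\subseteq\mathcal X$; $T$ rounds from initial state $s_1$. In round $t$ the decision maker plays a (possibly randomized) $x_t\in X_{s_t}$, the adversary chooses a transition function $g_t$ and reward function $f_t$ (values in $[0,1]$), $s_{t+1}=g_t(s_t,x_t)$, reward $f_t(s_t,x_t)$, and $g_t,f_t$ are revealed. A policy is $\gamma:\mathcal S\to\mathcal X$ with $\gamma(s)\in X_s$; its simulation is $s^\gamma_1=s_1$, $x^\gamma_t=\gamma(s^\gamma_t)$, $s^\gamma_{t+1}=g_t(s^\gamma_t,x^\gamma_t)$. Policy regret w.r.t. a finite policy set $\Gamma$: $\max_{\gamma\in\Gamma}\sum_tf_t(s^\gamma_t,x^\gamma_t)-\sum_t\mathbb{E}[f_t(s_t,x_t)]$. External regret: $\max_{\gamma\in\Gamma}\sum_tf_t(s_t,\gamma(s_t))-\sum_t\mathbb{E}[f_t(s_t,x_t)]$, where $s_t$ are the algorithm's actual states. $\sigma$-chasability: there is a (possibly randomized) chasing oracle such that for any target policy $\gamma\in\Gamma$, any round $t_{\mathrm{init}}$ and any initial state $s_{\mathrm{init}}$, it outputs in each round $t\ge t_{\mathrm{init}}$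 an action $\hat x(t)$ feasible for $\hat s(t)$ (with $\hat s(t_{\mathrm{init}})=s_{\mathrm{init}}$, $\hat s(t)=g_{t-1}(\hat s(t-1),\hat x(t-1))$), observes $g_t,f_t$ afterwards, and for every $t_{\mathrm{final}}\ge t_{\mathrm{init}}$ satisfies $\sum_{t=t_{\mathrm{init}}}^{t_{\mathrm{final}}}f_t(s^\gamma_t,x^\gamma_t)-\sum_{t=t_{\mathrm{init}}}^{t_{\mathrm{final}}}\mathbb{E}[f_t(\hat s(t),\hat x(t))]\le\sigma$. *)

From HB Require Import structures.
From mathcomp Require Import all_boot all_order all_algebra.
From mathcomp Require Import reals.
Set Implicit Arguments. Unset Strict Implicit. Unset Printing Implicit Defensive.
Import Order.TTheory GRing.Theory Num.Theory.
Local Open Scope ring_scope.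

(* Rounds are indexed from 0: internal round t is round t+1 of the paper.
   An adversary is a pair of infinite sequences
     gs : nat -> S -> X -> S   (transition functions g_t)
     fs : nat -> S -> X -> R   (reward functions f_t)
   fixed in advance (oblivious); a horizon-T game uses the first T of them. *)

Section DdMDP.
Variables (R : realType) (S X : finType).

Record hist_item := HistItem {
  h_state : S; h_act : X; h_trans : S -> X -> S; h_rew : S -> X -> R }.

(* A (behavioural) randomized online strategy: given the absolute round t,
   the history observed so far and the current state, a distribution on X. *)
Definition strategy := nat -> seq hist_item -> S -> X -> R.

Definition valid_strategy (Xs : S -> {set X}) (p : strategy) : Prop :=
  forall t h s,
    (forall x, 0 <= p t h s x) /\
    (forall x, x \notin Xs s -> p t h s x = 0) /\
    \sum_x p t h s x = 1.

(* Expected value of  sum_{k < n} score (t+k) s_{t+k} x_{t+k}  when the strategy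
   p is run from round t, with history h and current state s, against gs, fs. *)
Fixpoint exp_sum (p : strategy) (gs : nat -> S -> X -> S)
    (fs : nat -> S -> X -> R) (score : nat -> S -> X -> R)
    (n t : nat) (h : seq hist_item) (s : S) : R :=
  match n with
  | 0 => 0
  | n'.+1 => \sum_x p t h s x *
        (score t s x +
         exp_sum p gs fs score n' t.+1
           (rcons h (HistItem s x (gs t) (fs t))) (gs t s x))
  end.

Definition is_policy (Xs : S -> {set X}) (gam : S -> X) : Prop :=
  forall s, gam s \in Xs s.

Fixpoint sim (s1 : S) (gs : nat -> S -> X -> S) (gam : S -> X) (t : nat) : S :=
  match t with
  | 0 => s1
  | t'.+1 => gs t' (sim s1 gs gam t') (gam (sim s1 gs gam t'))
  end.

Definition admissible_adv (adm : (S -> X -> S) -> Prop)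
    (gs : nat -> S -> X -> S) (fs : nat -> S -> X -> R) : Prop :=
  forall t, adm (gs t) /\ (forall s x, 0 <= fs t s x <= 1).

Definition policy_reward (s1 : S) gs (fs : nat -> S -> X -> R) gam (a b : nat) : R :=
  \sum_(a <= t < b) fs t (sim s1 gs gam t) (gam (sim s1 gs gam t)).

Definition chasable (Xs : S -> {set X}) (s1 : S)
    (adm : (S -> X -> S) -> Prop) (sigma : R) : Prop :=
  exists oracle : (S -> X) -> nat -> S -> strategy,
    (forall gam ti si, valid_strategy Xs (oracle gam ti si)) /\
    forall gam, is_policy Xs gam ->
    forall (ti : nat) (si : S) gs fs, admissible_adv adm gs fs ->
    forall tf : nat, (ti <= tf)%N ->
      policy_reward s1 gs fs gam ti tf.+1
      - exp_sum (oracle gam ti si) gs fs fs (tf.+1 - ti) ti [::] si <= sigma.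

Definition algorithm := nat -> strategy.

Definition valid_alg (Xs : S -> {set X}) (alg : algorithm) : Prop :=
  forall T, valid_strategy Xs (alg T).

Definition alg_reward (alg : algorithm) (s1 : S) gs fs (T : nat) : R :=
  exp_sum (alg T) gs fs fs T 0 [::] s1.

(* Policy regret against the comparator gam (the regret is the max over gam
   in Gamma of this quantity). *)
Definition policy_regret_vs (alg : algorithm) (s1 : S) gs fs gam (T : nat) : R :=
  policy_reward s1 gs fs gam 0 T - alg_reward alg s1 gs fs T.

Definition external_regret_vs (alg : algorithm) (s1 : S) gs fs gam (T : nat) : R :=
  exp_sum (alg T) gs fs (fun t s _ => fs t s (gam s)) T 0 [::] s1
  - alg_reward alg s1 gs fs T.

Definition reg_sublinear
    (reg : algorithm -> S -> (nat -> S -> X -> S) -> (nat -> S -> X -> R) ->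
           (S -> X) -> nat -> R)
    (Xs : S -> {set X}) (s1 : S) (adm : (S -> X -> S) -> Prop)
    (alg : algorithm) : Prop :=
  forall eps : R, 0 < eps -> exists T0 : nat, forall T : nat, (T0 <= T)%N ->
    forall gs fs, admissible_adv adm gs fs ->
    forall gam, is_policy Xs gam -> reg alg s1 gs fs gam T <= eps * T%:R.

Definition reg_linear
    (reg : algorithm -> S -> (nat -> S -> X -> S) -> (nat -> S -> X -> R) ->
           (S -> X) -> nat -> R)
    (Xs : S -> {set X}) (s1 : S) (adm : (S -> X -> S) -> Prop)
    (alg : algorithm) : Prop :=
  exists c : R, 0 < c /\ exists T0 : nat, forall T : nat, (T0 <= T)%N ->
    exists gs fs, admissible_adv adm gs fs /\
    exists gam, is_policy Xs gam /\ c * T%:R <= reg alg s1 gs fs gam T.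

End DdMDP.

From HB Require Import structures.
From mathcomp Require Import all_boot all_order all_algebra.
From mathcomp Require Import reals.
From mathcomp Require Import ring lra.
Set Implicit Arguments. Unset Strict Implicit. Unset Printing Implicit Defensive.
Import Order.TTheory GRing.Theory Num.Theory.
Local Open Scope ring_scope.

(** Two states and two actions; playing action x moves to state x.  Being
   in state [true] pays 1/2 and playing [false] pays a bonus of 1/4.
   Always playing [true] earns T/2 along its own path, so it is the
   benchmark for policy regret, while on the algorithm's actual states
   switching every action to [false] gains 1/4 per round, so always-[false]
   is the benchmark for external regret.  The two regrets sum to T/2 plus
   the expected sum of f_t(s_t, false) - 2 f_t(s_t, x_t), and with the
   potential 1/2 on state [false] every round adds at least -1/4 to the
   latter; so the sum is at least T/4 - 1/2 and the regrets cannot both be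
   sublinear.  Chasing costs at most one
   round: the first action already lands on the target's state. *)

Section ExpectedSums.
Variables (R : realType) (S X : finType).
Implicit Types (p : strategy R S X) (gs : nat -> S -> X -> S)
  (fs sc : nat -> S -> X -> R).

Lemma exp_sumBZ p gs fs sc1 sc2 (c : R) n t h s :
  exp_sum p gs fs sc1 n t h s - c * exp_sum p gs fs sc2 n t h s =
  exp_sum p gs fs (fun t s x => sc1 t s x - c * sc2 t s x) n t h s.
Proof.
elim: n t h s => [|n IHn] t h s /=; first by rewrite mulr0 subr0.
rewrite mulr_sumr -sumrB; apply: eq_bigr => x _.
by rewrite -IHn; ring.
Qed.

Lemma exp_sum_ge_potential p gs fs sc (phi : S -> R) (c M : R) n :
  (forall t h s, (forall x, 0 <= p t h s x) /\ \sum_x p t h s x = 1) ->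
  (forall s, phi s <= M) ->
  (forall t s x, c + phi s <= sc t s x + phi (gs t s x)) ->
  forall t h s, n%:R * c + phi s - M <= exp_sum p gs fs sc n t h s.
Proof.
move=> p_distr phi_le sc_ge; elim: n => [|n IHn] t h s /=.
  by have := phi_le s; lra.
have [p_ge0 p_sum1] := p_distr t h s.
apply: (@le_trans _ _ (\sum_x p t h s x * (n.+1%:R * c + phi s - M))).
  by rewrite -mulr_suml p_sum1 mul1r.
apply: ler_sum => x _; apply: ler_wpM2l => //.
have := IHn t.+1 (rcons h (HistItem s x (gs t) (fs t))) (gs t s x).
by have := sc_ge t s x; rewrite -natr1; lra.
Qed.

Definition det_strategy (a : nat -> X) : strategy R S X :=
  fun t _ _ x => (x == a t)%:R.

Lemma sum_pointmass (a : X) (F : X -> R) : \sum_x (x == a)%:R * F x = F a.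
Proof.
rewrite (bigD1 a) //= eqxx mul1r big1 ?addr0 // => x /negPf ->.
by rewrite mul0r.
Qed.

Lemma det_strategy_valid (a : nat -> X) :
  valid_strategy (fun=> setT) (det_strategy a).
Proof.
move=> t h s; split; first by move=> x; rewrite ler0n.
split; first by move=> x; rewrite inE.
by rewrite -[RHS](sum_pointmass (a t) (fun=> 1)); apply: eq_bigr => x _; rewrite mulr1.
Qed.

Lemma exp_sum_det_strategyS (a : nat -> X) gs fs sc n t h s :
  exp_sum (det_strategy a) gs fs sc n.+1 t h s =
  sc t s (a t) + exp_sum (det_strategy a) gs fs sc n t.+1
                   (rcons h (HistItem s (a t) (gs t) (fs t))) (gs t s (a t)).
Proof. exact: sum_pointmass. Qed.

End ExpectedSums.

Section RegretTradeoff.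
Variables (R : realType) (S X : finType).

Lemma eventually_le_linear (c d : R) : 0 < c ->
  exists N, forall T, (N <= T)%N -> d <= c * T%:R.
Proof.
move=> c_gt0; exists (Num.bound (`|d| / c)) => T le_NT.
have /ltW := archi_boundP (divr_ge0 (normr_ge0 d) (ltW c_gt0)).
rewrite ler_pdivrMr // => le_d.
apply: le_trans (real_ler_norm _) _; first exact: num_real.
by apply: le_trans le_d _; rewrite mulrC ler_pM2l // ler_nat.
Qed.

Lemma reg_linear_of_sum_ge
    (reg1 reg2 : algorithm R S X -> S -> (nat -> S -> X -> S) ->
                 (nat -> S -> X -> R) -> (S -> X) -> nat -> R)
    Xs s1 adm alg gs fs gam1 gam2 (c d : R) :
  0 < c -> admissible_adv adm gs fs -> is_policy Xs gam1 -> is_policy Xs gam2 ->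
  (forall T, c * T%:R - d <= reg1 alg s1 gs fs gam1 T + reg2 alg s1 gs fs gam2 T) ->
  reg_sublinear reg1 Xs s1 adm alg -> reg_linear reg2 Xs s1 adm alg.
Proof.
move=> c_gt0 adv pol1 pol2 sum_ge sublin1.
have [T0 reg1_le] := sublin1 (c / 2) ltac:(lra).
have [T1 d_le] := @eventually_le_linear (c / 4) d ltac:(lra).
exists (c / 4); split; first lra.
exists (maxn T0 T1) => T; rewrite geq_max => /andP[le_T0T le_T1T].
exists gs, fs; split=> //; exists gam2; split=> //.
have := sum_ge T; have := reg1_le T le_T0T gs fs adv gam1 pol1.
by have := d_le T le_T1T; lra.
Qed.

End RegretTradeoff.

Section Instance.
Variable R : realType.

Definition jump : bool -> bool -> bool := fun _ x => x.

Definition jump_only (g : bool -> bool -> bool) : Prop := g = jump.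

Definition jumps : nat -> bool -> bool -> bool := fun _ => jump.

Definition trap_reward : nat -> bool -> bool -> R :=
  fun _ s x => (if s then 1/2 else 0) + (if x then 0 else 1/4).

Lemma trap_admissible : admissible_adv jump_only jumps trap_reward.
Proof. by move=> t; split=> // s x; rewrite /trap_reward; case: s; case: x; lra. Qed.

Lemma sim_jump_only s1 gs gam : (forall t, jump_only (gs t)) ->
  forall t, sim s1 gs gam t = iter t gam s1.
Proof. by move=> gs_jump; elim=> [|t IHt] //=; rewrite gs_jump IHt. Qed.

Lemma policy_reward_stay T :
  policy_reward true jumps trap_reward (fun=> true) 0 T = T%:R / 2.
Proof.
rewrite /policy_reward (eq_bigr (fun=> 1 / 2)).
  by rewrite sumr_const_nat subn0 -mulr_natl; lra.
move=> t _; rewrite sim_jump_only //.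
have -> : iter t (fun=> true) true = true by case: t.
by rewrite /trap_reward /=; lra.
Qed.

Lemma policy_plus_external_regret_ge (alg : algorithm R bool bool) :
  valid_alg (fun=> setT) alg -> forall T,
  1 / 4 * T%:R - 1 / 2 <=
    policy_regret_vs alg true jumps trap_reward (fun=> true) T +
    external_regret_vs alg true jumps trap_reward (fun=> false) T.
Proof.
move=> alg_valid T.
rewrite /policy_regret_vs /external_regret_vs policy_reward_stay /alg_reward.
set E := exp_sum _ _ _ trap_reward _ _ _ _.
set Ef := exp_sum _ _ _ _ _ _ _ _.
have -> : T%:R / 2 - E + (Ef - E) = T%:R / 2 + (Ef - 2 * E) by ring.
rewrite /Ef /E exp_sumBZ.
have alg_distr t h s :
    (forall x, 0 <= alg T t h s x) /\ \sum_x alg T t h s x = 1.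
  by have [? [? ?]] := alg_valid T t h s.
have step_ge t s x : -1 / 4 + (if s then 0 else 1 / 2) <=
    trap_reward t s false - 2 * trap_reward t s x +
    (if jumps t s x then 0 else 1 / 2) :> R.
  by rewrite /trap_reward /jumps /jump; case: s; case: x; lra.
have phi_le (s : bool) : (if s then 0 else 1 / 2) <= 1 / 2 :> R.
  by case: s; lra.
have := exp_sum_ge_potential trap_reward T alg_distr phi_le step_ge 0 [::] true.
by lra.
Qed.

Definition follow_policy (gam : bool -> bool) : strategy R bool bool :=
  det_strategy (fun t => gam (iter t gam true)).

Lemma exp_sum_follow_policy gam gs fs : (forall t, jump_only (gs t)) ->
  forall n t h, exp_sum (follow_policy gam) gs fs fs n t h (iter t gam true) =
  \sum_(t <= k < t + n) fs k (iter k gam true) (gam (iter k gam true)).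
Proof.
move=> gs_jump; elim=> [|n IHn] t h; first by rewrite addn0 big_geq.
rewrite exp_sum_det_strategyS gs_jump big_ltn ?addnS ?ltnS ?leq_addr //.
by rewrite -addSn (IHn t.+1).
Qed.

Lemma chasable_jump_only : chasable (fun=> setT) true jump_only (1 : R).
Proof.
exists (fun gam _ _ => follow_policy gam); split.
  by move=> gam _ _; apply: det_strategy_valid.
move=> gam _ ti si gs fs adv tf le_ti_tf.
have gs_jump t : jump_only (gs t) by case: (adv t).
have fs01 t := (adv t).2.
rewrite subSn // exp_sum_det_strategyS gs_jump /jump /=.
rewrite exp_sum_follow_policy // /policy_reward.
rewrite (eq_bigr (fun k => fs k (iter k gam true) (gam (iter k gam true))));
  last by move=> k _; rewrite sim_jump_only.
rewrite big_ltn ?ltnS // addSn subnKC //.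
have := fs01 ti (iter ti gam true) (gam (iter ti gam true)).
by have := fs01 ti si (gam (iter ti gam true)); lra.
Qed.

End Instance.

Theorem theorem8 (R : realType) :
  exists (S X : finType) (Xs : S -> {set X}) (s1 : S)
         (adm : (S -> X -> S) -> Prop) (sigma : R),
    (forall s, Xs s != set0) /\ (exists g, adm g) /\
    chasable Xs s1 adm sigma /\
    (forall alg : algorithm R S X, valid_alg Xs alg ->
       reg_sublinear (@policy_regret_vs R S X) Xs s1 adm alg ->
       reg_linear (@external_regret_vs R S X) Xs s1 adm alg) /\
    (forall alg : algorithm R S X, valid_alg Xs alg ->
       reg_sublinear (@external_regret_vs R S X) Xs s1 adm alg ->
       reg_linear (@policy_regret_vs R S X) Xs s1 adm alg).
Proof.
exists bool, bool, (fun=> setT), true, jump_only, 1.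
have all_policies (gam : bool -> bool) : is_policy (fun=> setT) gam.
  by move=> s; rewrite inE.
split; first by move=> s; apply/set0Pn; exists true; rewrite inE.
split; first by exists jump.
split; first exact: chasable_jump_only.
split=> alg alg_valid.
- apply: (reg_linear_of_sum_ge (c := 1 / 4) (d := 1 / 2) _ (trap_admissible R)
           (all_policies _) (all_policies _)); first lra.
  exact: policy_plus_external_regret_ge.
- apply: (reg_linear_of_sum_ge (c := 1 / 4) (d := 1 / 2) _ (trap_admissible R)
           (all_policies _) (all_policies _)); first lra.
  by move=> T; rewrite [leRHS]addrC; apply: policy_plus_external_regret_ge.
Qed.
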